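(* Every one-input one-output tAND net is sub-sound.
   Context: Petri nets and markings. A Petri net is a triple $(P,T,F)$ with $P$ a finite set of places, $T$ a finite set of transitions, $P\cap T=\emptyset$, and $F\subseteq (P\times T)\cup(T\times P)$. For a node $x$, $\bullet x=\{y\mid (y,x)\in F\}$, $x\bullet=\{y\mid (x,y)\in F\}$. A marking is a multiset over $P$ (a function $P\to\mathbb N$); sets of places are identified with bags of multiplicity one, $+,-,\le$ are pointwise, and $k.m$ is the sum of $k$ copies of $m$. Transition $t$ is enabled at $m$ iff $\bullet t\le m$, firing gives $m-\bullet t+t\bullet$, and $m\xrightarrow{*}m'$ denotes reachability by a finite (possibly empty) firing sequence. Workflow nets. A pWF net is $(P,T,F,I,O)$ with $(P,T,F)$ a Petri net, $I,O\subseteq P$ non-empty, every node reachable by a directed path from some node of $I$, and some node of $O$ reachable from every node. A tWF net is the same with $I,O$ non-empty subsets of $T$. Input nodes may have incoming edges and output nodes outgoing edges. A WF net is one-input one-output if $|I|=|O|=1$. The place-completion $\mathrm{pc}(N)$ of a tWF net $N=(P,T,F,I,O)$ is obtained by adding two fresh places $p_i,p_o$ with edges $(p_i,t)$ for all $t\in I$ and $(t,p_o)$ for all $t\in O$, and taking input set $\{p_i\}$ and output set $\{p_o\}$. AND nets. An AND net is an acyclic WF net $(P,T,F,I,O)$ such that for every place $p$: (1) either $p\in I$ and $|\bullet p|=0$, or $p\notin I$ and $|\bullet p|=1$; and (2) either $p\in O$ and $|p\bullet|=0$, or $p\notin O$ and $|p\bullet|=1$. A tAND net is an AND net that is a tWF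 net. Sub-soundness. A pWF net is sub-sound if for all integers $k\ge k'\ge 0$ and every marking $m'$: if $k.I\xrightarrow{*}m'+k'.O$ then $m'\xrightarrow{*}(k-k').O$. A tWF net is sub-sound iff its place-completion is. *)

From mathcomp Require Import all_boot.
Set Implicit Arguments. Unset Strict Implicit. Unset Printing Implicit Defensive.

(* A Petri net (P,T,F): P and T are disjoint finite types, and the flow
   relation F ⊆ (P×T) ∪ (T×P) is given by its two parts. *)
Record petri_net := PetriNet {
  place : finType;
  trans : finType;
  arc_pt : place -> trans -> bool;
  arc_tp : trans -> place -> bool
}.

Definition node (N : petri_net) : finType := (place N + trans N)%type.

Definition flow (N : petri_net) : rel (node N) :=
  fun x y => match x, y with
  | inl p, inr t => arc_pt p t
  | inr t, inl p => arc_tp t p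
  | _, _ => false
  end.

Definition marking (N : petri_net) := {ffun place N -> nat}.

Definition kset (N : petri_net) (k : nat) (S : {set place N}) : marking N :=
  [ffun p => k * (p \in S)].

Definition madd (N : petri_net) (m1 m2 : marking N) : marking N :=
  [ffun p => m1 p + m2 p].

Definition enabled (N : petri_net) (m : marking N) (t : trans N) : bool :=
  [forall p, (arc_pt p t : nat) <= m p].

Definition fire (N : petri_net) (m : marking N) (t : trans N) : marking N :=
  [ffun p => m p - arc_pt p t + arc_tp t p].

Inductive reach (N : petri_net) : marking N -> marking N -> Prop :=
| reach_refl m : reach m m
| reach_step m t m' : enabled m t -> reach (fire m t) m' -> reach m m'.

Definition is_WF (N : petri_net) (I O : {set node N}) : Prop :=
  I != set0 /\ O != set0 /\
  (forall x : node N, exists2 i, i \in I & connect (@flow N) i x) /\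
  (forall x : node N, exists2 o, o \in O & connect (@flow N) x o).

Definition pnodes (N : petri_net) (S : {set place N}) : {set node N} :=
  [set x : node N | if x is inl p then p \in S else false].
Definition tnodes (N : petri_net) (S : {set trans N}) : {set node N} :=
  [set x : node N | if x is inr t then t \in S else false].

Definition is_pWF (N : petri_net) (I O : {set place N}) : Prop :=
  is_WF (pnodes I) (pnodes O).
Definition is_tWF (N : petri_net) (I O : {set trans N}) : Prop :=
  is_WF (tnodes I) (tnodes O).

Definition acyclic_net (N : petri_net) : Prop :=
  forall x y : node N, flow x y -> ~~ connect (@flow N) y x.

Definition preset_p (N : petri_net) (p : place N) : {set trans N} :=
  [set t | arc_tp t p].
Definition postset_p (N : petri_net) (p : place N) : {set trans N} :=
  [set t | arc_pt p t].

Definition is_AND (N : petri_net) (I O : {set node N}) : Prop :=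
  acyclic_net N /\ is_WF I O /\
  forall p : place N,
    ((inl p \in I) && (#|preset_p p| == 0) ||
     (inl p \notin I) && (#|preset_p p| == 1)) /\
    ((inl p \in O) && (#|postset_p p| == 0) ||
     (inl p \notin O) && (#|postset_p p| == 1)).

Definition is_tAND (N : petri_net) (I O : {set trans N}) : Prop :=
  is_AND (tnodes I) (tnodes O).

Definition pWF_sub_sound (N : petri_net) (I O : {set place N}) : Prop :=
  forall (k k' : nat) (m' : marking N), k' <= k ->
    reach (kset k I) (madd m' (kset k' O)) -> reach m' (kset (k - k') O).

(* Place completion: places P + bool, with inr false = p_i, inr true = p_o. *)
Definition pc_net (N : petri_net) (I O : {set trans N}) : petri_net :=
  @PetriNet (place N + bool)%type (trans N)
    (fun x t => match x with inl p => arc_pt p t | inr b => ~~ b && (t \in I) end)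
    (fun t x => match x with inl p => arc_tp t p | inr b => b && (t \in O) end).

Definition pc_in (N : petri_net) (I O : {set trans N}) : {set place (pc_net I O)} :=
  [set inr false].
Definition pc_out (N : petri_net) (I O : {set trans N}) : {set place (pc_net I O)} :=
  [set inr true].

Definition tWF_sub_sound (N : petri_net) (I O : {set trans N}) : Prop :=
  pWF_sub_sound (pc_in I O) (pc_out I O).

From mathcomp Require Import all_boot.
From mathcomp Require Import zify.
Set Implicit Arguments. Unset Strict Implicit. Unset Printing Implicit Defensive.

(* A firing sequence from [m0] to [M] is summarised by its
   firing-count vector [c], which satisfies the state equation
     M p + sum_u pre(p,u) c(u) = m0 p + sum_u post(u,p) c(u).
   In the place completion of a tAND net with input transition [i] and
   output transition [o], every ordinary place [p] has exactly one producer
   [src p] and one consumer [dst p], so the state equation reads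
     M p + c (dst p) = c (src p),  M p_i + c i = k,  M p_o = c o.
   Along flow paths [c] can only decrease, and every transition is reached
   from [i], hence [c t <= k] for all [t].  If [k.p_i] reaches [m' + k'.p_o]
   with count [c], we complete the run from [m']: as long as some transition
   has fired fewer than [k] times, one that is topologically minimal among
   them is enabled; firing it increases [c] and keeps the state equation.
   When every transition has fired [k] times the state equation forces
   [m' = (k-k').p_o]. *)

Lemma sum_indicator (T : finType) (f : T -> bool) (c : T -> nat) (t : T) :
  (forall u, f u = (u == t)) -> \sum_u (f u : nat) * c u = c t.
Proof.
move=> Hf; rewrite (bigD1 t) //= Hf eqxx mul1n big1 ?addn0 // => u.
by rewrite Hf => /negbTE ->.
Qed.

Lemma sum_incr (T : finType) (f : T -> nat) (c : T -> nat) (t : T) :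
  \sum_u f u * (c u + (u == t)) = \sum_u f u * c u + f t.
Proof.
under eq_bigr => u _ do rewrite mulnDr.
rewrite big_split /=; congr (_ + _).
rewrite (bigD1 t) //= eqxx muln1 big1 ?addn0 // => u /negbTE ->.
by rewrite muln0.
Qed.

(* The deficit [sum_u (k - c u)] drops by one when an entry below [k] is
   incremented; it is the termination measure of the completion argument. *)
Lemma deficit_incr (T : finType) (k : nat) (c : T -> nat) (t : T) : c t < k ->
  (\sum_u (k - (c u + (u == t)))).+1 = \sum_u (k - c u).
Proof.
move=> ltk; rewrite [RHS](bigD1 t) // [X in X.+1](bigD1 t) //= eqxx -addSn.
congr (_ + _); first lia.
by apply: eq_bigr => u /negbTE ->; rewrite addn0.
Qed.

Lemma connect_nonincreasing (T : finType) (e : rel T) (f : T -> nat) (x y : T) :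
  (forall a b, e a b -> f b <= f a) -> connect e x y -> f y <= f x.
Proof.
move=> mono /connectP [pth + ->]; elim: pth x => //= z pth IH x /andP [exz pz].
exact: leq_trans (IH z pz) (mono _ _ exz).
Qed.

Lemma card1_pick (T : finType) (A : {set T}) (d : T) :
  #|A| = 1 -> forall u, (u \in A) = (u == odflt d [pick t in A]).
Proof.
move/eqP/cards1P => [a ->] u; case: pickP => [t|/(_ a)]; last by rewrite inE eqxx.
by rewrite !inE => /eqP ->.
Qed.

Section StateEquation.
Variable N : petri_net.

Definition state_eq (m0 M : marking N) (c : trans N -> nat) : Prop :=
  forall p, M p + \sum_u (arc_pt p u : nat) * c u = m0 p + \sum_u (arc_tp u p : nat) * c u.

Lemma state_eq_fire (m0 M : marking N) c t :
  state_eq m0 M c -> enabled M t -> state_eq m0 (fire M t) (fun u => c u + (u == t)).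
Proof.
move=> Hc en p; have := Hc p; have := forallP en p; rewrite !sum_incr /fire ffunE; lia.
Qed.

Lemma reach_state_eq (m0 M : marking N) : reach m0 M -> exists c, state_eq m0 M c.
Proof.
elim=> [m|m t m' en _ [c Hc]].
- by exists (fun _ => 0) => p; rewrite !big1 // => u _; rewrite muln0.
- exists (fun u => c u + (u == t)) => p.
  by have := Hc p; have := forallP en p; rewrite !sum_incr /fire ffunE; lia.
Qed.

Lemma fire_madd (m X : marking N) t :
  enabled m t -> fire (madd m X) t = madd (fire m t) X.
Proof. by move=> en; apply/ffunP => p; have := forallP en p; rewrite !ffunE; lia. Qed.

Lemma enabled_madd (m X : marking N) t : enabled m t -> enabled (madd m X) t.
Proof.
by move=> en; apply/forallP => p; rewrite ffunE; apply: leq_trans (forallP en p) (leq_addr _ _).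
Qed.

(* The rank of a node (number of its ancestors) strictly grows along the
   flow of an acyclic net; it provides a topological order. *)
Definition rank (x : node N) : nat := #|[set z | connect (@flow N) z x]|.

Lemma rank_lt (x y : node N) : acyclic_net N -> flow x y -> rank x < rank y.
Proof.
move=> acy fxy; apply: proper_card; apply/properP; split.
- by apply/subsetP => z; rewrite !inE => h; exact: connect_trans h (connect1 fxy).
- by exists y; rewrite !inE ?connect0 //; exact: acy fxy.
Qed.

End StateEquation.

Section OneInputOneOutputAND.
Variables (N : petri_net) (I O : {set trans N}) (i o : trans N).
Variables (src dst : place N -> trans N).
Hypothesis I_single : forall u, (u \in I) = (u == i).
Hypothesis O_single : forall u, (u \in O) = (u == o).
Hypothesis src_spec : forall p u, arc_tp u p = (u == src p).
Hypothesis dst_spec : forall p u, arc_pt p u = (u == dst p).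
Hypothesis i_reaches : forall t, connect (@flow N) (inr i) (inr t).
Hypothesis acyclic : acyclic_net N.

Local Notation start k := (kset k (pc_in I O)).
Local Notation final k := (kset k (pc_out I O)).

Lemma residual_balance k k' (m : marking (pc_net I O)) c :
  state_eq (start k) (madd m (final k')) c ->
  [/\ forall p, m (inl p) + c (dst p) = c (src p),
      m (inr false) + c i = k & m (inr true) + k' = c o].
Proof.
move=> Hc; split.
- move=> p; have := Hc (inl p).
  rewrite (@sum_indicator _ (fun u => arc_pt p u) c _ (dst_spec p)).
  rewrite (@sum_indicator _ (fun u => arc_tp u p) c _ (src_spec p)).
  by rewrite !ffunE /pc_out /pc_in !inE /= !muln0 !addn0.
- have := Hc (inr false).
  rewrite (@sum_indicator _ (fun u => u \in I) c _ I_single) big1 //.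
  by rewrite !ffunE /pc_out /pc_in !inE /= muln0 muln1 !addn0.
- have := Hc (inr true).
  rewrite (@sum_indicator _ (fun u => u \in O) c _ O_single) big1 //.
  by rewrite !ffunE /pc_out /pc_in !inE /= muln0 muln1 add0n addn0.
Qed.

(* No transition fires more often than [i]: counts do not increase along
   the flow, and [i] reaches every transition. *)
Lemma count_le_input k k' m c t :
  state_eq (start k) (madd m (final k')) c -> c t <= k.
Proof.
move=> Hc; have [Hp Hi _] := residual_balance Hc.
pose level (x : node N) := if x is inl p then c (dst p) else if x is inr u then c u else 0.
have mono : forall x y, flow x y -> level y <= level x.
  move=> [p|u] [q|v] //=; rewrite ?src_spec ?dst_spec => /eqP ->.
  - by [].
  - by have := Hp q; lia.
have := connect_nonincreasing mono (i_reaches t); rewrite /=; lia.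
Qed.

Lemma min_unfinished_enabled k k' m c ts :
  state_eq (start k) (madd m (final k')) c -> c ts < k ->
  (forall t, c t < k -> rank (inr ts : node N) <= rank (inr t : node N)) ->
  enabled m ts.
Proof.
move=> Hc ltk minimal; have [Hp Hi _] := residual_balance Hc.
apply/forallP => -[p|[|]] //=.
- rewrite dst_spec; case: eqP => [ets|] //=.
  suff lt_src : c ts < c (src p).
    by rewrite -(ltn_add2r (c (dst p))) add0n Hp -ets.
  rewrite ltn_neqAle; apply/andP; split; last by rewrite ets -(Hp p) leq_addl.
  apply/eqP => same; have := minimal (src p); rewrite -same => /(_ ltk).
  have f1 : flow (inr (src p) : node N) (inl p) by rewrite /= src_spec.
  have f2 : flow (inl p : node N) (inr ts) by rewrite /= dst_spec ets.
  by have := ltn_trans (rank_lt acyclic f1) (rank_lt acyclic f2); rewrite ltnNge => /negbTE ->.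
- rewrite I_single; case: eqP => //= eti.
  by rewrite -(ltn_add2r (c i)) add0n Hi -eti.
Qed.

Lemma finished_marking k k' m c :
  state_eq (start k) (madd m (final k')) c -> (forall t, c t = k) ->
  m = final (k - k').
Proof.
move=> Hc all_k; have [Hp Hi Ho] := residual_balance Hc.
apply/ffunP => -[p|[|]]; rewrite !ffunE /pc_out inE /=.
- by rewrite (_ : m (inl p) = 0) //; have := Hp p; rewrite !all_k; lia.
- by rewrite (_ : m (inr true) = k - k') //; move: Ho; rewrite all_k; lia.
- by rewrite (_ : m (inr false) = 0) //; move: Hi; rewrite all_k; lia.
Qed.

(* Any residual marking of a run from [k.p_i] to [m + k'.p_o] can be driven
   to [(k-k').p_o], by firing minimal unfinished transitions. *)
Lemma complete_run k k' m c :
  state_eq (start k) (madd m (final k')) c -> reach m (final (k - k')).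
Proof.
have [n] := ubnP (\sum_u (k - c u)); elim: n m c => // n IH m c ltn Hc.
case: (boolP [exists t, c t < k]) => [/existsP [t0 lt0] | /existsPn none].
- case: (@arg_minnP _ t0 (fun t => c t < k) (fun t => rank (inr t : node N)) lt0).
  move=> ts ltk minimal.
  have en := min_unfinished_enabled Hc ltk minimal.
  apply: (reach_step en); apply: (IH _ (fun u => c u + (u == ts))).
  + by move: ltn; rewrite -(deficit_incr ltk).
  + by rewrite -fire_madd //; exact: state_eq_fire Hc (enabled_madd _ en).
- suff -> : m = final (k - k') by exact: reach_refl.
  apply: (finished_marking Hc) => t.
  by have := count_le_input t Hc; have := none t; lia.
Qed.

End OneInputOneOutputAND.

Theorem mainTheorem19 (N : petri_net) (I O : {set trans N}) :
  #|I| = 1 -> #|O| = 1 -> is_tAND I O -> tWF_sub_sound I O.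
Proof.
move=> /eqP /cards1P [i HI] /eqP /cards1P [o HO] [acy [[_ [_ [from_input _]]] places]].
have I_single u : (u \in I) = (u == i) by rewrite HI inE.
have O_single u : (u \in O) = (u == o) by rewrite HO inE.
have one_pre (p : place N) : #|preset_p p| = 1.
  by have [+ _] := places p; rewrite /tnodes !inE /= => /eqP.
have one_post (p : place N) : #|postset_p p| = 1.
  by have [_ +] := places p; rewrite /tnodes !inE /= => /eqP.
pose src (p : place N) := odflt i [pick t in preset_p p].
pose dst (p : place N) := odflt i [pick t in postset_p p].
have src_spec (p : place N) u : arc_tp u p = (u == src p) by rewrite -card1_pick // inE.
have dst_spec (p : place N) u : arc_pt p u = (u == dst p) by rewrite -card1_pick // inE.
have i_reaches (t : trans N) : connect (@flow N) (inr i) (inr t).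
  by have [[p|t'] ] := from_input (inr t); rewrite /tnodes inE //= I_single => /eqP ->.
move=> k k' m' _ /reach_state_eq [c Hc].
exact: (complete_run I_single O_single src_spec dst_spec i_reaches acy Hc).
Qed.
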